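(* Let $H\in\mathbb{R}^{n\times d}$ have rank $h$, $\Sigma\in\mathbb{R}^{n\times n}$ symmetric positive definite, and let $\Gamma_i$ ($i\ge0$) be the empirical covariances of deterministic EKI iterates $v_{i+1}^{(j)}=v_i^{(j)}+\Gamma_iH^\top(H\Gamma_iH^\top+\Sigma)^{-1}(y-Hv_i^{(j)})$. Let $\mathbb{M}_i=(I+\Gamma_iH^\top\Sigma^{-1}H)^{-1}$ and let $\mathbb{P},\mathbb{Q},\mathbb{N}$ be as in the context. Then for every $i\ge0$: $\mathbb{M}_i$ commutes with each of $\mathbb{P},\mathbb{Q},\mathbb{N}$; $\mathbb{P}^2=\mathbb{P}$, $\mathbb{Q}^2=\mathbb{Q}$, $\mathbb{N}^2=\mathbb{N}$; $\mathbb{P}\mathbb{Q}=\mathbb{Q}\mathbb{N}=\mathbb{P}\mathbb{N}=0$; and $\mathbb{P}+\mathbb{Q}+\mathbb{N}=I$.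
   Context: $H^+=(H^\top\Sigma^{-1}H)^\dagger H^\top\Sigma^{-1}$. Let $r$ be the number of positive eigenvalues of $H\Gamma_0H^\top w=\delta\Sigma w$, and $w_1,\dots,w_n$ a basis of $\mathbb{R}^n$ with $w_k^\top\Sigma w_l$ equal to $1$ if $k=l$, $0$ otherwise, each $w_\ell$ a generalized eigenvector of $(H\Gamma_iH^\top,\Sigma)$ for every $i\ge0$ with eigenvalue $\delta_{\ell,i}$, where $w_1,\dots,w_r\in\mathsf{Ran}(\Sigma^{-1}H)$ have positive eigenvalues, $w_{r+1},\dots,w_h\in\mathsf{Ran}(\Sigma^{-1}H)$ eigenvalue zero, $w_{h+1},\dots,w_n$ a basis of $\mathsf{Ker}(H^\top)$. Let $u_\ell=\frac1{\delta_{\ell,0}}\Gamma_0H^\top w_\ell$ ($\ell\le r$), $u_\ell=H^+\Sigma w_\ell$ ($r<\ell\le h$), $U=[u_1,\dots,u_h]$, $U_{k:l}$ its columns $k$ through $l$. $\mathbb{P}=U_{1:r}U_{1:r}^\top H^\top\Sigma^{-1}H$, $\mathbb{Q}=U_{r+1:h}U_{r+1:h}^\top H^\top\Sigma^{-1}H$, $\mathbb{N}=I-\mathbb{P}-\mathbb{Q}$. *)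

From HB Require Import structures.
From mathcomp Require Import all_boot all_order all_algebra.
Set Implicit Arguments. Unset Strict Implicit. Unset Printing Implicit Defensive.
Import Order.TTheory GRing.Theory Num.Theory.
Local Open Scope ring_scope.

Section EKI.
Variable R : realFieldType.

(* Ensemble of J particles in R^d stored as the columns of a d x J matrix. *)
Definition ens_mean_mx d J (V : 'M[R]_(d, J)) : 'M[R]_(d, J) :=
  V *m (J%:R^-1 *: const_mx 1).

Definition emp_cov d J (V : 'M[R]_(d, J)) : 'M[R]_d :=
  let C := V - ens_mean_mx V in J%:R^-1 *: (C *m C^T).

Definition eki_step n d J (H : 'M[R]_(n, d)) (Sigma : 'M[R]_n)
    (y : 'cV[R]_n) (V : 'M[R]_(d, J)) : 'M[R]_(d, J) :=
  let G := emp_cov V in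
  V + G *m H^T *m invmx (H *m G *m H^T + Sigma)
        *m (y *m const_mx 1 - H *m V).

Definition eki_iter n d J (H : 'M[R]_(n, d)) (Sigma : 'M[R]_n)
    (y : 'cV[R]_n) (V0 : 'M[R]_(d, J)) (i : nat) : 'M[R]_(d, J) :=
  iter i (eki_step H Sigma y) V0.

Definition eki_cov n d J (H : 'M[R]_(n, d)) (Sigma : 'M[R]_n)
    (y : 'cV[R]_n) (V0 : 'M[R]_(d, J)) (i : nat) : 'M[R]_d :=
  emp_cov (eki_iter H Sigma y V0 i).

Definition eki_M n d J (H : 'M[R]_(n, d)) (Sigma : 'M[R]_n)
    (y : 'cV[R]_n) (V0 : 'M[R]_(d, J)) (i : nat) : 'M[R]_d :=
  invmx (1%:M + eki_cov H Sigma y V0 i *m H^T *m invmx Sigma *m H).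

Definition sym_posdef n (S : 'M[R]_n) : Prop :=
  S^T = S /\ forall x : 'cV[R]_n, x != 0 -> 0 < (x^T *m S *m x) 0 0.

Definition is_MP_pinv m k (A : 'M[R]_(m, k)) (X : 'M[R]_(k, m)) : Prop :=
  [/\ A *m X *m A = A, X *m A *m X = X,
      (A *m X)^T = A *m X & (X *m A)^T = X *m A].

(* u_l: for l < r, (1/delta_{l,0}) Gamma_0 H^T w_l;
        otherwise  H^+ Sigma w_l  with H^+ = Adag H^T Sigma^{-1},
        Adag the MP pseudo-inverse of H^T Sigma^{-1} H
   (only used for l < h). Indices are 0-based. *)
Definition eki_u n d (H : 'M[R]_(n, d)) (Sigma : 'M[R]_n) (G0 : 'M[R]_d)
    (Adag : 'M[R]_d) (W : 'M[R]_n) (delta0 : 'I_n -> R) (r : nat)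
    (l : 'I_n) : 'cV[R]_d :=
  if (l < r)%N then (delta0 l)^-1 *: (G0 *m H^T *m col l W)
  else Adag *m H^T *m invmx Sigma *m Sigma *m col l W.

(* U_{a:b} U_{a:b}^T H^T Sigma^{-1} H, with U_{a:b}U_{a:b}^T written as the
   sum of outer products u_l u_l^T over a <= l < b (0-based). *)
Definition eki_proj n d (H : 'M[R]_(n, d)) (Sigma : 'M[R]_n) (G0 : 'M[R]_d)
    (Adag : 'M[R]_d) (W : 'M[R]_n) (delta0 : 'I_n -> R) (r a b : nat)
    : 'M[R]_d :=
  (\sum_(l < n | (a <= l < b)%N)
      eki_u H Sigma G0 Adag W delta0 r l *m (eki_u H Sigma G0 Adag W delta0 r l)^T)
  *m H^T *m invmx Sigma *m H.

End EKI.

From HB Require Import structures.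
From mathcomp Require Import all_boot all_order all_algebra.
From mathcomp Require Import ring.
Set Implicit Arguments. Unset Strict Implicit. Unset Printing Implicit Defensive.
Import Order.TTheory GRing.Theory Num.Theory.
Local Open Scope ring_scope.

(* Write A = H^T Sigma^-1 H and w_l for the l-th column of W. If
   H Gamma H^T w = delta Sigma w, one EKI step maps Gamma H^T w to
   (1 + delta)^-2 Gamma H^T w, so every Gamma_i H^T w_l is a multiple of
   Gamma_0 H^T w_l; since A u_l = H^T w_l, each u_l (l < h) is an eigenvector
   of Gamma_i A. The u_l are moreover A-orthonormal, so for an index interval
   I the matrix (sum_(l in I) u_l u_l^T) A is idempotent, two disjoint
   intervals give orthogonal projections, and each such projection commutes
   with Gamma_i A, hence with M_i = (I + Gamma_i A)^-1. N = I - P - Q is then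
   the complementary projection. *)

Lemma comm_mx_invmx (R : comUnitRingType) (d : nat) (X P : 'M[R]_d) :
  comm_mx X P -> comm_mx (invmx X) P.
Proof.
rewrite /comm_mx => XP; have [uX|/invmx_out -> //] := boolP (X \in unitmx).
rewrite -[LHS]mulmx1 -(mulmxV uX) mulmxA -(mulmxA _ P) -XP.
by rewrite mulmxA mulVmx ?mul1mx.
Qed.

Section OuterSums.
Variables (R : comNzRingType) (n d : nat).
Implicit Types (A G : 'M[R]_d) (u : 'I_n -> 'cV[R]_d) (p q : pred 'I_n).

Definition outer_sum u p : 'M[R]_d := \sum_(l | p l) u l *m (u l)^T.

Lemma eq_outer_sum u p q : p =1 q -> outer_sum u p = outer_sum u q.
Proof. exact: eq_bigl. Qed.

Lemma outer_sum_pred0 u p : p =1 pred0 -> outer_sum u p = 0.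
Proof. by move=> p0; rewrite /outer_sum big_pred0. Qed.

Lemma mulmx_outer_sum_orthonormal A u p q :
  (forall k l, p k -> q l -> (u k)^T *m A *m u l = (k == l)%:R%:M) ->
  outer_sum u p *m A *m (outer_sum u q *m A) = outer_sum u (predI p q) *m A.
Proof.
move=> orth; rewrite mulmxA; congr (_ *m A).
rewrite /outer_sum 2!mulmx_suml [RHS]big_mkcondr /=; apply: eq_bigr => k pk.
rewrite mulmx_sumr (eq_bigr (fun l => (k == l)%:R *: (u k *m (u l)^T)));
  last first.
  move=> l ql; rewrite !mulmxA -2!(mulmxA (u k)) orth //.
  by rewrite mul_mx_scalar scalemxAl.
have [qk|nqk] := boolP (q k).
  rewrite (bigD1 k) //= eqxx scale1r big1 ?addr0 // => l /andP[_ lk].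
  by rewrite eq_sym (negbTE lk) scale0r.
apply: big1 => l ql; have /negbTE-> : k != l by apply: contraNneq nqk => ->.
by rewrite scale0r.
Qed.

Lemma comm_mx_outer_sum A G u p :
  A^T = A -> G^T = G ->
  (forall l, p l -> exists c, G *m A *m u l = c *: u l) ->
  comm_mx (G *m A) (outer_sum u p *m A).
Proof.
move=> sA sG eigen; rewrite /comm_mx !mulmxA; congr (_ *m A).
rewrite /outer_sum mulmx_sumr -[RHS]mulmxA mulmx_suml; apply: eq_bigr => l pl.
have [c Gu] := eigen l pl.
have uG : (u l)^T *m (A *m G) = c *: (u l)^T.
  by apply: trmx_inj; rewrite !trmx_mul trmxK sA sG linearZ /= trmxK.
by rewrite mulmxA Gu -scalemxAl -mulmxA uG scalemxAr.
Qed.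

End OuterSums.

Lemma complementary_projections (R : nzRingType) (d : nat) (P Q M : 'M[R]_d) :
  P *m P = P -> Q *m Q = Q -> P *m Q = 0 -> Q *m P = 0 ->
  comm_mx M P -> comm_mx M Q ->
  let N := 1%:M - P - Q in
  [/\ comm_mx M N, N *m N = N, Q *m N = 0, P *m N = 0 & P + Q + N = 1%:M].
Proof.
move=> PP QQ PQ QP MP MQ N.
have PN : P *m N = 0 by rewrite !mulmxBr mulmx1 PP PQ subrr subr0.
have QN : Q *m N = 0 by rewrite !mulmxBr mulmx1 QP QQ subr0 subrr.
split=> //.
- by rewrite /comm_mx !mulmxBr !mulmxBl mulmx1 mul1mx MP MQ.
- by rewrite [in LHS]/N 2!mulmxBl PN QN mul1mx !subr0.
- by rewrite /N addrC [P + Q]addrC addrA 2!subrK.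
Qed.

Section EmpiricalCovariance.
Variables (R : realFieldType) (d J : nat).
Implicit Types (V : 'M[R]_(d, J)) (x : 'cV[R]_d).

Lemma emp_cov_sym V : (emp_cov V)^T = emp_cov V.
Proof. by rewrite /emp_cov linearZ /= trmx_mul trmxK. Qed.

Lemma emp_cov_quadE V x :
  (x^T *m emp_cov V *m x) 0 0
  = J%:R^-1 * \sum_j (((V - ens_mean_mx V)^T *m x) j 0) ^+ 2.
Proof.
rewrite /emp_cov; set C := V - _.
have -> : x^T *m (J%:R^-1 *: (C *m C^T)) *m x
    = J%:R^-1 *: ((C^T *m x)^T *m (C^T *m x)).
  by rewrite -scalemxAr -scalemxAl trmx_mul trmxK !mulmxA.
rewrite mxE; congr (_ * _); rewrite mxE.
by apply: eq_bigr => j _; rewrite mxE expr2.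
Qed.

Lemma emp_cov_psd V x : 0 <= (x^T *m emp_cov V *m x) 0 0.
Proof.
rewrite emp_cov_quadE mulr_ge0 ?invr_ge0 ?ler0n //.
by apply: sumr_ge0 => j _; rewrite sqr_ge0.
Qed.

Lemma emp_cov_quad_eq0 V x :
  (x^T *m emp_cov V *m x) 0 0 = 0 -> emp_cov V *m x = 0.
Proof.
rewrite emp_cov_quadE; set C := V - _ => /eqP.
have [J0 _|J0] := eqVneq J 0%N.
  by rewrite /emp_cov (_ : J%:R^-1 = 0) ?scale0r ?mul0mx // J0 invr0.
rewrite mulf_eq0 invr_eq0 pnatr_eq0 (negbTE J0) /= psumr_eq0 => [/allP Cx0|j _].
  have Ctx : C^T *m x = 0.
    apply/matrixP => j k; rewrite ord1 [RHS]mxE.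
    by have /= := Cx0 j (mem_index_enum j); rewrite sqrf_eq0 => /eqP.
  by rewrite /emp_cov -/C -scalemxAl -mulmxA Ctx mulmx0 scaler0.
by rewrite sqr_ge0.
Qed.

Lemma const_mx1_mul_mean :
  (const_mx 1 : 'rV[R]_J) *m (J%:R^-1 *: const_mx 1 : 'M_J) = const_mx 1.
Proof.
apply/matrixP => i j; case: J j => [[] //|J' j].
rewrite !mxE; under eq_bigr do rewrite !mxE mul1r mulr1.
by rewrite sumr_const card_ord -[LHS]mulr_natl mulfV ?pnatr_eq0.
Qed.

Lemma emp_cov_eki_step n (H : 'M[R]_(n, d)) Sigma y V :
  let G := emp_cov V in
  let B := 1%:M - G *m H^T *m invmx (H *m G *m H^T + Sigma) *m H in
  emp_cov (eki_step H Sigma y V) = B *m G *m B^T.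
Proof.
move=> G B; set E := (J%:R^-1 *: const_mx 1 : 'M[R]_J).
have centerE X : X - ens_mean_mx X = X *m (1%:M - E) :> 'M_(d, J).
  by rewrite mulmxBr mulmx1.
have center_y : y *m const_mx 1 *m (1%:M - E) = 0.
  by rewrite -mulmxA mulmxBr mulmx1 const_mx1_mul_mean subrr mulmx0.
have step_center : eki_step H Sigma y V - ens_mean_mx (eki_step H Sigma y V)
    = B *m (V - ens_mean_mx V).
  rewrite !centerE /eki_step -/G mulmxDl -mulmxA mulmxBl center_y sub0r mulmxN.
  by rewrite /B mulmxBl mul1mx -!mulmxA.
rewrite /emp_cov step_center -/(emp_cov V) -/G /G /emp_cov.
by rewrite trmx_mul -scalemxAr -scalemxAl !mulmxA.
Qed.

End EmpiricalCovariance.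

Lemma unitmx_posdef (R : realFieldType) n (S : 'M[R]_n) :
  (forall x : 'cV[R]_n, x != 0 -> 0 < (x^T *m S *m x) 0 0) -> S \in unitmx.
Proof.
move=> posS; rewrite -row_free_unit -kermx_eq0; apply: contraT.
move=> /rowV0Pn[v /sub_kermxP vS v0].
have := posS v^T; rewrite trmxK vS mul0mx mxE ltxx -trmx0 (inj_eq trmx_inj).
by move/(_ v0).
Qed.

Lemma orthonormal_col (R : comNzRingType) n (Sigma W : 'M[R]_n) k l :
  W^T *m Sigma *m W = 1%:M ->
  (col k W)^T *m Sigma *m col l W = (k == l)%:R%:M.
Proof.
move=> WSW; rewrite tr_col -row_mul colE mulmxA -row_mul WSW -colE.
by apply/matrixP => i j; rewrite !ord1 !mxE eq_sym.
Qed.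

Lemma kalman_step_eigen (R : fieldType) n d (H : 'M[R]_(n, d)) (G : 'M[R]_d)
    (Sigma : 'M[R]_n) (w : 'cV[R]_n) (c : R) :
  G^T = G -> Sigma^T = Sigma -> H *m G *m H^T + Sigma \in unitmx ->
  H *m G *m H^T *m w = c *: (Sigma *m w) -> 1 + c != 0 ->
  let B := 1%:M - G *m H^T *m invmx (H *m G *m H^T + Sigma) *m H in
  B *m G *m B^T *m (H^T *m w) = (1 + c) ^- 2 *: (G *m (H^T *m w)).
Proof.
move=> sG sSigma uS HGw c1 B; set S := H *m G *m H^T + Sigma in uS B *.
have sS : S^T = S by rewrite /S linearD /= !trmx_mul trmxK sG sSigma mulmxA.
have Sw : S *m w = (1 + c) *: (Sigma *m w).
  by rewrite mulmxDl HGw scalerDl scale1r addrC.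
have gain_w : invmx S *m (H *m (G *m (H^T *m w))) = (c / (1 + c)) *: w.
  rewrite (mulmxA H) (mulmxA _ _ w) HGw -[w in RHS](mulKmx uS) Sw.
  by rewrite -!scalemxAr !scalerA mulfVK.
have shrink : 1 - c / (1 + c) = (1 + c)^-1 by field.
have BtHw : B^T *m (H^T *m w) = (1 + c)^-1 *: (H^T *m w).
  rewrite /B linearB /= trmx1 mulmxBl mul1mx !trmx_mul !trmxK sG trmx_inv sS.
  by rewrite -!mulmxA gain_w -scalemxAr -[in RHS]shrink scalerBl scale1r.
have BGHw : B *m (G *m (H^T *m w)) = (1 + c)^-1 *: (G *m (H^T *m w)).
  rewrite /B mulmxBl mul1mx -!mulmxA gain_w -!scalemxAr.
  by rewrite -[in RHS]shrink scalerBl scale1r.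
by rewrite -!mulmxA BtHw -!scalemxAr BGHw scalerA -expr2 exprVn.
Qed.

Section EKICovariance.
Variables (R : realFieldType) (n d J : nat) (H : 'M[R]_(n, d)).
Variables (Sigma : 'M[R]_n) (y : 'cV[R]_n) (V0 : 'M[R]_(d, J)).
Local Notation Gamma := (eki_cov H Sigma y V0).

Lemma eki_covS i :
  Gamma i.+1 = emp_cov (eki_step H Sigma y (eki_iter H Sigma y V0 i)).
Proof. by rewrite /eki_cov /eki_iter iterS. Qed.

Hypothesis posSigma : sym_posdef Sigma.

Lemma eki_innovation_unitmx i : H *m Gamma i *m H^T + Sigma \in unitmx.
Proof.
apply: unitmx_posdef => x x0; rewrite mulmxDr mulmxDl mxE.
have -> : x^T *m (H *m Gamma i *m H^T) *m x
    = (H^T *m x)^T *m Gamma i *m (H^T *m x) by rewrite trmx_mul trmxK !mulmxA.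
by rewrite ltr_wpDl ?emp_cov_psd ?posSigma.2.
Qed.

Variables (W : 'M[R]_n) (delta : nat -> 'I_n -> R).
Hypothesis WSW : W^T *m Sigma *m W = 1%:M.
Hypothesis eigW : forall i l,
  H *m Gamma i *m H^T *m col l W = delta i l *: (Sigma *m col l W).

Lemma eki_eigenvalueE i l :
  delta i l = ((H^T *m col l W)^T *m Gamma i *m (H^T *m col l W)) 0 0.
Proof.
have -> : (H^T *m col l W)^T *m Gamma i *m (H^T *m col l W)
    = (col l W)^T *m (H *m Gamma i *m H^T *m col l W).
  by rewrite trmx_mul trmxK !mulmxA.
by rewrite eigW -scalemxAr mulmxA orthonormal_col // eqxx !mxE eqxx mulr1.
Qed.

Lemma eki_eigenvalue_ge0 i l : 0 <= delta i l.
Proof. by rewrite eki_eigenvalueE emp_cov_psd. Qed.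

Lemma eki_cov_HtW i l : exists c,
  Gamma i *m (H^T *m col l W) = c *: (Gamma 0 *m (H^T *m col l W)).
Proof.
elim: i => [|i [c IH]]; first by exists 1; rewrite scale1r.
exists ((1 + delta i l) ^- 2 * c); rewrite eki_covS emp_cov_eki_step /=.
rewrite (kalman_step_eigen (c := delta i l)) ?emp_cov_sym ?posSigma.1 //;
  rewrite ?eki_innovation_unitmx //.
- by rewrite IH scalerA.
- by rewrite eigW.
- by rewrite lt0r_neq0 // ltr_pwDl ?eki_eigenvalue_ge0.
Qed.

End EKICovariance.

Section EKIProjections.
Variables (R : realFieldType) (n d h r J : nat) (H : 'M[R]_(n, d)).
Variables (Sigma : 'M[R]_n) (y : 'cV[R]_n) (V0 : 'M[R]_(d, J)).
Variables (W : 'M[R]_n) (delta : nat -> 'I_n -> R) (Adag : 'M[R]_d).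
Local Notation Gamma := (eki_cov H Sigma y V0).
Local Notation A := (H^T *m invmx Sigma *m H).
Local Notation u := (eki_u H Sigma (Gamma 0) Adag W (delta 0%N) r).
Local Notation proj := (eki_proj H Sigma (Gamma 0) Adag W (delta 0%N) r).

Lemma eki_projE a b :
  proj a b = outer_sum u [pred l : 'I_n | (a <= l < b)%N] *m A.
Proof. by rewrite /eki_proj /outer_sum !mulmxA. Qed.

Lemma eki_proj_empty a b : (b <= a)%N -> proj a b = 0.
Proof.
move=> ba; rewrite eki_projE outer_sum_pred0 ?mul0mx // => l /=.
apply/negbTE/andP => -[al lb].
by have := leq_trans lb (leq_trans ba al); rewrite ltnn.
Qed.

Hypothesis posSigma : sym_posdef Sigma.
Hypothesis WSW : W^T *m Sigma *m W = 1%:M.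
Hypothesis eigW : forall i l,
  H *m Gamma i *m H^T *m col l W = delta i l *: (Sigma *m col l W).
Hypothesis W_in_range : forall l : 'I_n, (l < h)%N ->
  exists x, col l W = invmx Sigma *m H *m x.
Hypothesis delta0_gt0 : forall l : 'I_n, (l < r)%N -> 0 < delta 0%N l.
Hypothesis delta0_eq0 : forall l : 'I_n, (r <= l < h)%N -> delta 0%N l = 0.
Hypothesis pinvA : is_MP_pinv A Adag.

Let unitSigma : Sigma \in unitmx.
Proof. exact: unitmx_posdef posSigma.2. Qed.

Let symA : A^T = A.
Proof. by rewrite !trmx_mul trmxK trmx_inv posSigma.1 mulmxA. Qed.

Lemma eki_cov0_HtW (l : 'I_n) : (l < h)%N ->
  Gamma 0 *m (H^T *m col l W) = delta 0%N l *: u l.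
Proof.
move=> lh; rewrite /eki_u; case: (ltnP l r) => [lr|rl].
  by rewrite scalerA mulfV ?scale1r ?mulmxA // lt0r_neq0 ?delta0_gt0.
rewrite delta0_eq0 ?rl // scale0r; apply: emp_cov_quad_eq0.
by rewrite -(eki_eigenvalueE WSW eigW) delta0_eq0 ?rl.
Qed.

Lemma mulmx_A_u (l : 'I_n) : (l < h)%N -> A *m u l = H^T *m col l W.
Proof.
move=> lh; rewrite /eki_u; case: (ltnP l r) => lr.
  have HGw : H *m (Gamma 0 *m (H^T *m col l W))
      = delta 0%N l *: (Sigma *m col l W).
    by rewrite !mulmxA eigW.
  rewrite -scalemxAr -!mulmxA HGw -!scalemxAr (mulmxA (invmx Sigma)) mulVmx //.
  by rewrite mul1mx scalerA mulVf ?scale1r // lt0r_neq0 ?delta0_gt0.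
have [x ->] := W_in_range lh.
rewrite -(mulmxA _ (invmx Sigma) Sigma) mulVmx // mulmx1 !mulmxA.
by case: pinvA => AAA _ _ _; rewrite -[in RHS]AAA !mulmxA.
Qed.

Lemma eki_u_orthonormal (k l : 'I_n) : (k < h)%N -> (l < h)%N ->
  (u k)^T *m A *m u l = (k == l)%:R%:M.
Proof.
move=> kh lh; have [x Wk] := W_in_range kh.
have uA : (u k)^T *m A = x^T *m A.
  rewrite -[A in LHS]symA -trmx_mul mulmx_A_u // Wk.
  by rewrite !trmx_mul trmxK trmx_inv posSigma.1 !mulmxA.
have Hx : H *m x = Sigma *m col k W by rewrite Wk !mulmxA mulmxV ?mul1mx.
rewrite uA -[x^T *m A *m _]mulmxA mulmx_A_u // mulmxA -trmx_mul Hx.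
by rewrite trmx_mul posSigma.1 orthonormal_col.
Qed.

Lemma eki_cov_A_u i (l : 'I_n) : (l < h)%N ->
  exists c, Gamma i *m A *m u l = c *: u l.
Proof.
move=> lh; have [c Gi] := eki_cov_HtW posSigma WSW eigW i l.
exists (c * delta 0%N l).
by rewrite -mulmxA mulmx_A_u // Gi eki_cov0_HtW // scalerA.
Qed.

Lemma eki_proj_mul a b a' b' : (b <= h)%N -> (b' <= h)%N ->
  proj a b *m proj a' b' = proj (maxn a a') (minn b b').
Proof.
move=> bh b'h; rewrite !eki_projE mulmx_outer_sum_orthonormal.
  congr (_ *m A); apply: eq_outer_sum => l /=.
  by rewrite geq_max leq_min andbACA.
move=> k l /andP[_ kb] /andP[_ lb'].
by rewrite eki_u_orthonormal ?(leq_trans kb) ?(leq_trans lb').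
Qed.

Lemma eki_M_comm_proj i a b :
  (b <= h)%N -> comm_mx (eki_M H Sigma y V0 i) (proj a b).
Proof.
move=> bh; rewrite /eki_M eki_projE.
have -> : Gamma i *m H^T *m invmx Sigma *m H = Gamma i *m A by rewrite !mulmxA.
apply/comm_mx_invmx/comm_mx_sym/comm_mxD; first exact: comm_mx1.
apply: comm_mx_sym.
apply: comm_mx_outer_sum => [||l /andP[_ lb]]; rewrite ?emp_cov_sym //.
by apply: eki_cov_A_u; apply: leq_trans bh.
Qed.

End EKIProjections.

Theorem proposition3p15 (R : realFieldType) (n d h r J : nat)
  (H : 'M[R]_(n, d)) (Sigma : 'M[R]_n) (y : 'cV[R]_n) (V0 : 'M[R]_(d, J))
  (W : 'M[R]_n) (delta : nat -> 'I_n -> R) (Adag : 'M[R]_d) :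
  \rank H = h ->
  sym_posdef Sigma ->
  W^T *m Sigma *m W = 1%:M ->
  (forall (i : nat) (l : 'I_n),
     H *m eki_cov H Sigma y V0 i *m H^T *m col l W
       = delta i l *: (Sigma *m col l W)) ->
  (r <= h)%N ->
  (forall l : 'I_n, (l < h)%N ->
     exists x : 'cV[R]_d, col l W = invmx Sigma *m H *m x) ->
  (forall l : 'I_n, (l < r)%N -> 0 < delta 0%N l) ->
  (forall l : 'I_n, (r <= l < h)%N -> delta 0%N l = 0) ->
  (forall l : 'I_n, (h <= l)%N -> H^T *m col l W = 0) ->
  is_MP_pinv (H^T *m invmx Sigma *m H) Adag ->
  let P := eki_proj H Sigma (eki_cov H Sigma y V0 0) Adag W (delta 0%N) r 0 r in
  let Q := eki_proj H Sigma (eki_cov H Sigma y V0 0) Adag W (delta 0%N) r r h in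
  let N := 1%:M - P - Q in
  forall i : nat,
    let M := eki_M H Sigma y V0 i in
    [/\ [/\ M *m P = P *m M, M *m Q = Q *m M & M *m N = N *m M],
        [/\ P *m P = P, Q *m Q = Q & N *m N = N],
        [/\ P *m Q = 0, Q *m N = 0 & P *m N = 0]
      & P + Q + N = 1%:M].
Proof.
move=> _ posSigma WSW eigW r_le_h W_in_range delta0_gt0 delta0_eq0 _ pinvA.
move=> P Q N i M.
have proj_mul := eki_proj_mul posSigma WSW eigW W_in_range delta0_gt0 pinvA.
have M_comm := eki_M_comm_proj posSigma WSW eigW W_in_range delta0_gt0
  delta0_eq0 pinvA i.
have PP : P *m P = P by rewrite proj_mul ?maxnn ?minnn.
have QQ : Q *m Q = Q by rewrite proj_mul ?maxnn ?minnn.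
have PQ : P *m Q = 0.
  by rewrite proj_mul // max0n (minn_idPl r_le_h) eki_proj_empty.
have QP : Q *m P = 0.
  by rewrite proj_mul // maxn0 (minn_idPr r_le_h) eki_proj_empty.
have MP : comm_mx M P by exact: M_comm.
have MQ : comm_mx M Q by exact: M_comm.
have [MN NN QN PN PQN] := complementary_projections PP QQ PQ QP MP MQ.
by split.
Qed.
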